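(* Let $j^\star=\left\lfloor-\frac{\log(1-\lambda)}{\log(\lambda d+1)}\right\rfloor$, assume $I>j^\star$, and let $x^\star$ be the unique fixed point. Then $\mathcal L_M(x^\star)=\mathcal L_S(x^\star)+\frac1d$ and $$j^\star-\frac1d\le\mathcal L_S(x^\star)\le j^\star-\frac1d+1.$$
   Context: Fix $\lambda\in(0,1)$, an integer $d\ge2$ and an integer $I>1$. $\mathcal S=\{x=(x_{i,j})_{0\le i\le j\le I}: x_{i,j}\ge0,\ \sum_{i=0}^I\sum_{j=i}^I x_{i,j}=1\}$; $x_{i,\cdot}=\sum_{j=i}^I x_{i,j}$, $x_{\cdot,j}=\sum_{i=0}^j x_{i,j}$; $\mathcal L_S(x)=\sum_{i=1}^I i\,x_{i,\cdot}$, $\mathcal L_M(x)=\sum_{j=1}^I j\,x_{\cdot,j}$. For $0\le j\le I$: $\mathcal R_j(x)=\max\{0,\lambda(1-d\sum_{i=0}^j(j+1-i)x_{i,\cdot})\}\,\mathbf 1\{\sum_{i=0}^j x_{\cdot,i}=0\}$, $\mathcal G_j(x)=\lambda d\,\mathbf 1\{\sum_{i=0}^j x_{\cdot,i}=0,\ d\sum_{i=0}^j(j+1-i)x_{i,\cdot}\le1\}\sum_{i=0}^j x_{i,\cdot}$. Write $\rho_k^{a,b}(x)=\mathcal R_k(x)\frac{x_{a,b}}{x_{\cdot,b}}\mathbf 1\{x_{\cdot,b}>0\}$ (equal to $0$ when $x_{\cdot,b}=0$). The drift $b(x)$ is: $b_{0,0}=\lambda d(x_{0,\cdot}-x_{0,0})-\lambda+\mathcal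 R_0(x)$; for $i<j$: $b_{i,j}=x_{i+1,j}-\mathbf 1\{i>0\}x_{i,j}-\lambda d x_{i,j}-\rho_{j-1}^{i,j}+\mathbf 1\{i>0\}\rho_{j-2}^{i-1,j-1}+\mathbf 1\{j=I,i>0\}\rho_{I-1}^{i-1,I}$; $b_{1,1}=-x_{1,1}+\lambda d(x_{1,\cdot}-x_{1,1})+\lambda-\mathcal R_0(x)-\rho_0^{1,1}-\mathcal G_1(x)$; for $2\le i\le I-1$: $b_{i,i}=-x_{i,i}+\lambda d(x_{i,\cdot}-x_{i,i})-\rho_{i-1}^{i,i}+\rho_{i-2}^{i-1,i-1}+\mathcal G_{i-1}(x)-\mathcal G_i(x)$; $b_{I,I}=-x_{I,I}+\rho_{I-2}^{I-1,I-1}+\mathcal G_{I-1}(x)+\rho_{I-1}^{I-1,I}$. A fluid solution is an absolutely continuous $x:\mathbb R_+\to\mathcal S$ with $\dot x_{i,j}(t)=b_{i,j}(x(t))$ for a.e. $t$ and all $i\le j$. A fixed point is a fluid solution with $b(x(t))=0$ for all $t\ge0$ (hence constant, identified with a point of $\mathcal S$). *)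

From Stdlib Require Import Reals Lra Lia Arith ZArith.
Open Scope R_scope.

(** A state x is a function nat -> nat -> R; only entries x i j with
    0 <= i <= j <= I are meaningful. *)

(** sumR a b f = sum_{k=a}^{b} f k  (0 if b < a). *)
Fixpoint sum_lt (n : nat) (f : nat -> R) : R :=
  match n with
  | O => 0
  | S m => sum_lt m f + f m
  end.
Definition sumR (a b : nat) (f : nat -> R) : R :=
  sum_lt (S b) (fun k => if Nat.leb a k then f k else 0).

Section Model.
Variables (lam : R) (d : nat) (I : nat).
Let dR := INR d.

(** x_{i,.} = sum_{j=i}^I x_{i,j} ;  x_{.,j} = sum_{i=0}^j x_{i,j} *)
Definition rowsum (x : nat -> nat -> R) (i : nat) : R := sumR i I (fun j => x i j).
Definition colsum (x : nat -> nat -> R) (j : nat) : R := sumR 0 j (fun i => x i j).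

Definition inS (x : nat -> nat -> R) : Prop :=
  (forall i j, (i <= j)%nat -> (j <= I)%nat -> 0 <= x i j) /\
  sumR 0 I (fun i => sumR i I (fun j => x i j)) = 1.

Definition LS (x : nat -> nat -> R) : R := sumR 1 I (fun i => INR i * rowsum x i).
Definition LM (x : nat -> nat -> R) : R := sumR 1 I (fun j => INR j * colsum x j).

Definition wsum (x : nat -> nat -> R) (j : nat) : R :=
  sumR 0 j (fun i => (INR j + 1 - INR i) * rowsum x i).

Definition ind (P : Prop) (dec : {P} + {~ P}) : R := if dec then 1 else 0.

Definition Rj (x : nat -> nat -> R) (j : nat) : R :=
  Rmax 0 (lam * (1 - dR * wsum x j)) *
  (if Req_dec_T (sumR 0 j (fun i => colsum x i)) 0 then 1 else 0).

Definition Gj (x : nat -> nat -> R) (j : nat) : R :=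
  lam * dR *
  (if Req_dec_T (sumR 0 j (fun i => colsum x i)) 0
   then (if Rle_dec (dR * wsum x j) 1 then 1 else 0) else 0) *
  sumR 0 j (fun i => rowsum x i).

Definition rho (x : nat -> nat -> R) (k a b : nat) : R :=
  if Rlt_dec 0 (colsum x b) then Rj x k * (x a b / colsum x b) else 0.

(** The drift b_{i,j}(x), for 0 <= i <= j <= I (with I > 1). *)
Definition drift (x : nat -> nat -> R) (i j : nat) : R :=
  if Nat.ltb i j then
    x (S i) j
    - (if Nat.ltb 0 i then x i j else 0)
    - lam * dR * x i j
    - rho x (j - 1) i j
    + (if Nat.ltb 0 i then rho x (j - 2) (i - 1) (j - 1) else 0)
    + (if andb (Nat.eqb j I) (Nat.ltb 0 i) then rho x (I - 1) (i - 1) I else 0)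
  else
  if Nat.eqb i 0 then
    lam * dR * (rowsum x 0 - x 0%nat 0%nat) - lam + Rj x 0
  else if Nat.eqb i I then
    - x I I + rho x (I - 2) (I - 1) (I - 1) + Gj x (I - 1) + rho x (I - 1) (I - 1) I
  else if Nat.eqb i 1 then
    - x 1%nat 1%nat + lam * dR * (rowsum x 1 - x 1%nat 1%nat) + lam - Rj x 0
    - rho x 0 1 1 - Gj x 1
  else
    - x i i + lam * dR * (rowsum x i - x i i) - rho x (i - 1) i i
    + rho x (i - 2) (i - 1) (i - 1) + Gj x (i - 1) - Gj x i.

Definition fixed_point (x : nat -> nat -> R) : Prop :=
  inS x /\ forall i j, (i <= j)%nat -> (j <= I)%nat -> drift x i j = 0.

End Model.

Definition jstar (lam : R) (d : nat) : Z :=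
  Int_part (- ln (1 - lam) / ln (lam * INR d + 1)).

From Stdlib Require Import Reals Lra Lia ZArith Classical.
Open Scope R_scope.

(** Let [m] be the first nonempty column of the fixed point.  For [j < m] the indicators
    in [R_j] and [G_j] are on, and the diagonal balance equations give inductively
    [G_j = λd (x_{0,.} + ... + x_{j,.})] and [d Σ_{i<=j} (j+1-i) x_{i,.} <= 1], so that
    [R_{m-1} = λ (1 - d Σ_{i<m} (m-i) x_{i,.})].  For [j >= m] both [R_j] and [G_j]
    vanish, and a downward induction over the columns shows that everything beyond column
    [m + 1] is empty.  Down columns [m] and [m + 1] the off-diagonal balance equations are
    linear recurrences; summing them yields [x_{0,.} = 1 - λ] and
    [(1 + λd)^m ((1 + λd) x_{0,m+1} + x_{0,m}) = 1] with [x_{0,m} > 0], i.e.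
    [(1 + λd)^m (1 - λ) <= 1 < (1 + λd)^(m+1) (1 - λ)], which says [m = j*].  The same
    sums give [L_S = m + x_{.,m+1} - 1/d] and [L_M = m + x_{.,m+1}].  If [m = I], the
    recurrence in the last column gives [(1 + λd)^I (1 - λ) <= 1], contradicting [I > j*]. *)

Lemma sum_lt_ext n f g : (forall k, (k < n)%nat -> f k = g k) -> sum_lt n f = sum_lt n g.
Proof.
  induction n as [|n IH]; intros H; simpl; auto.
  rewrite IH, H; auto.
Qed.

Lemma sum_lt_plus n f g : sum_lt n (fun k => f k + g k) = sum_lt n f + sum_lt n g.
Proof. induction n; simpl; [lra | rewrite IHn; lra]. Qed.

Lemma sum_lt_minus n f g : sum_lt n (fun k => f k - g k) = sum_lt n f - sum_lt n g.
Proof. induction n; simpl; [lra | rewrite IHn; lra]. Qed.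

Lemma sum_lt_scal n c f : sum_lt n (fun k => c * f k) = c * sum_lt n f.
Proof. induction n; simpl; [lra | rewrite IHn; lra]. Qed.

Lemma sum_lt_const n c : sum_lt n (fun _ => c) = INR n * c.
Proof. induction n; simpl; [lra |]. rewrite IHn. destruct n; simpl; lra. Qed.

Lemma sum_lt_zero n f : (forall k, (k < n)%nat -> f k = 0) -> sum_lt n f = 0.
Proof. intros H. rewrite (sum_lt_ext n f (fun _ => 0)), sum_lt_const by auto. lra. Qed.

Lemma sum_lt_nonneg n f : (forall k, (k < n)%nat -> 0 <= f k) -> 0 <= sum_lt n f.
Proof.
  induction n as [|n IH]; intros H; simpl; [lra |].
  pose proof (H n ltac:(lia)). pose proof (IH ltac:(intros; apply H; lia)). lra.
Qed.

Lemma sum_lt_term_le n f k :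
  (forall k, (k < n)%nat -> 0 <= f k) -> (k < n)%nat -> f k <= sum_lt n f.
Proof.
  induction n as [|n IH]; intros H Hk; simpl; [lia |].
  pose proof (sum_lt_nonneg n f ltac:(intros; apply H; lia)).
  destruct (Nat.eq_dec k n) as [-> | Hkn]; [lra |].
  pose proof (IH ltac:(intros; apply H; lia) ltac:(lia)). pose proof (H n ltac:(lia)). lra.
Qed.

Lemma sum_lt_nonneg_eq0 n f k :
  (forall k, (k < n)%nat -> 0 <= f k) -> sum_lt n f = 0 -> (k < n)%nat -> f k = 0.
Proof. intros H Hs Hk. pose proof (sum_lt_term_le n f k H Hk). pose proof (H k Hk). lra. Qed.

Lemma sum_lt_delta n p c : (p < n)%nat -> sum_lt n (fun k => if Nat.eqb k p then c else 0) = c.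
Proof.
  induction n as [|n IH]; intros H; simpl; [lia |].
  destruct (Nat.eq_dec p n) as [-> | Hpn].
  - rewrite Nat.eqb_refl, sum_lt_zero; [lra |].
    intros k Hk. destruct (Nat.eqb_spec k n); [lia | auto].
  - rewrite IH by lia. destruct (Nat.eqb_spec n p); [lia | lra].
Qed.

Lemma sum_lt_add n k f : sum_lt (n + k) f = sum_lt n f + sum_lt k (fun i => f (n + i)%nat).
Proof.
  induction k as [|k IH]; simpl; [rewrite Nat.add_0_r; lra |].
  rewrite Nat.add_succ_r. simpl. rewrite IH. lra.
Qed.

Lemma sum_lt_weighted n f :
  sum_lt n (fun i => (INR n - INR i) * f i) = sum_lt n (fun j => sum_lt (S j) f).
Proof.
  induction n as [|n IH]; [reflexivity |].
  change (sum_lt (S n) (fun i => (INR (S n) - INR i) * f i))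
    with (sum_lt n (fun i => (INR (S n) - INR i) * f i) + (INR (S n) - INR n) * f n).
  rewrite (sum_lt_ext n _ (fun i => (INR n - INR i) * f i + f i))
    by (intros; rewrite S_INR; ring).
  rewrite sum_lt_plus, IH, S_INR. simpl. ring.
Qed.

Lemma sumR_from0 b f : sumR 0 b f = sum_lt (S b) f.
Proof. reflexivity. Qed.

Lemma sumR_vanishing_below a b f :
  (forall k, (k < a)%nat -> f k = 0) -> sumR a b f = sum_lt (S b) f.
Proof.
  intros H. apply sum_lt_ext. intros k _.
  destruct (Nat.leb_spec a k); [reflexivity | rewrite H; auto].
Qed.

Lemma drift_offdiag lam d I x i j : (i < j)%nat ->
  drift lam d I x i j =
    x (S i) j
    - (if Nat.ltb 0 i then x i j else 0)
    - lam * INR d * x i j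
    - rho lam d I x (j - 1) i j
    + (if Nat.ltb 0 i then rho lam d I x (j - 2) (i - 1) (j - 1) else 0)
    + (if andb (Nat.eqb j I) (Nat.ltb 0 i) then rho lam d I x (I - 1) (i - 1) I else 0).
Proof. intros H. unfold drift. destruct (Nat.ltb_spec i j); [reflexivity | lia]. Qed.

Lemma drift_00 lam d I x :
  drift lam d I x 0 0 = lam * INR d * (rowsum I x 0 - x 0%nat 0%nat) - lam + Rj lam d I x 0.
Proof. reflexivity. Qed.

Lemma drift_11 lam d I x : (1 < I)%nat ->
  drift lam d I x 1 1 =
    - x 1%nat 1%nat + lam * INR d * (rowsum I x 1 - x 1%nat 1%nat) + lam - Rj lam d I x 0
    - rho lam d I x 0 1 1 - Gj lam d I x 1.
Proof.
  intros H. unfold drift. simpl Nat.ltb. simpl Nat.eqb at 1.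
  destruct (Nat.eqb_spec 1 I); [lia | reflexivity].
Qed.

Lemma drift_diag lam d I x i : (2 <= i)%nat -> (i < I)%nat ->
  drift lam d I x i i =
    - x i i + lam * INR d * (rowsum I x i - x i i) - rho lam d I x (i - 1) i i
    + rho lam d I x (i - 2) (i - 1) (i - 1) + Gj lam d I x (i - 1) - Gj lam d I x i.
Proof.
  intros H1 H2. unfold drift. rewrite Nat.ltb_irrefl.
  destruct (Nat.eqb_spec i 0); [lia |]. destruct (Nat.eqb_spec i I); [lia |].
  destruct (Nat.eqb_spec i 1); [lia | reflexivity].
Qed.

Lemma drift_II lam d I x : (0 < I)%nat ->
  drift lam d I x I I =
    - x I I + rho lam d I x (I - 2) (I - 1) (I - 1) + Gj lam d I x (I - 1)
    + rho lam d I x (I - 1) (I - 1) I.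
Proof.
  intros H. unfold drift. rewrite Nat.ltb_irrefl.
  destruct (Nat.eqb_spec I 0); [lia |]. rewrite Nat.eqb_refl. reflexivity.
Qed.

Lemma rowsum_single I x i p : (i <= p)%nat -> (p <= I)%nat ->
  (forall k, (i <= k)%nat -> (k <= I)%nat -> k <> p -> x i k = 0) -> rowsum I x i = x i p.
Proof.
  intros H1 H2 H. unfold rowsum, sumR.
  rewrite (sum_lt_ext _ _ (fun k => if Nat.eqb k p then x i p else 0)) by
    (intros k Hk; destruct (Nat.leb_spec i k), (Nat.eqb_spec k p); subst; auto;
     [apply H | lia]; lia).
  apply sum_lt_delta; lia.
Qed.

Lemma wsum_partial_sums I x k :
  wsum I x k = sum_lt (S k) (fun j => sum_lt (S j) (fun i => rowsum I x i)).
Proof.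
  unfold wsum. rewrite sumR_from0, <- sum_lt_weighted.
  apply sum_lt_ext. intros i _. rewrite S_INR. reflexivity.
Qed.

Lemma wsum_0 I x : wsum I x 0 = rowsum I x 0.
Proof. unfold wsum, sumR. simpl. ring. Qed.

Lemma Rj_nonneg lam d I x k : 0 <= Rj lam d I x k.
Proof.
  unfold Rj. pose proof (Rmax_l 0 (lam * (1 - INR d * wsum I x k))).
  destruct (Req_dec_T _ _); nra.
Qed.

Section FixedPointNonneg.
Variables (lam : R) (d I : nat) (x : nat -> nat -> R).
Hypothesis Hfix : fixed_point lam d I x.

Lemma fixed_point_nonneg i j : (i <= j)%nat -> (j <= I)%nat -> 0 <= x i j.
Proof. apply Hfix. Qed.

Lemma colsum_nonneg j : (j <= I)%nat -> 0 <= colsum x j.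
Proof. intros Hj. apply sum_lt_nonneg. intros k Hk. apply fixed_point_nonneg; lia. Qed.

Lemma rowsum_nonneg i : 0 <= rowsum I x i.
Proof.
  apply sum_lt_nonneg. intros k Hk.
  destruct (Nat.leb_spec i k); [apply fixed_point_nonneg; lia | lra].
Qed.

End FixedPointNonneg.

(* Shape of the off-diagonal balance equations down a column. *)
Lemma recurrence_telescope n (X u : nat -> R) a c :
  (forall i, (i < n)%nat ->
     X (S i) = (if Nat.ltb 0 i then X i - c * u (i - 1)%nat else 0) + a * X i + c * u i) ->
  forall j, (j < n)%nat -> X (S j) = a * sum_lt (S j) X + c * u j.
Proof.
  intros H. induction j as [|j IH]; intros Hj.
  - rewrite H by lia. simpl. ring.
  - rewrite H by lia. replace (0 <? S j)%nat with true by reflexivity.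
    rewrite Nat.sub_succ, Nat.sub_0_r.
    change (sum_lt (S (S j)) X) with (sum_lt (S j) X + X (S j)).
    rewrite IH by lia. ring.
Qed.

Lemma partial_sum_expansion n (X u : nat -> R) a c :
  (forall j, (j < n)%nat -> X (S j) = a * sum_lt (S j) X + c * u j) ->
  forall k, (k <= n)%nat ->
  sum_lt (S k) X = X 0%nat + a * sum_lt k (fun j => sum_lt (S j) X) + c * sum_lt k u.
Proof.
  intros H. induction k as [|k IH]; intros Hk; [simpl; ring |].
  change (sum_lt (S (S k)) X) with (sum_lt (S k) X + X (S k)).
  change (sum_lt (S k) (fun j => sum_lt (S j) X))
    with (sum_lt k (fun j => sum_lt (S j) X) + sum_lt (S k) X).
  change (sum_lt (S k) u) with (sum_lt k u + u k).
  rewrite H, IH by lia. ring.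
Qed.

Lemma partial_sum_ge_geometric n (X u : nat -> R) a c :
  0 < a -> 0 <= c -> (forall k, (k < n)%nat -> 0 <= u k) -> 0 <= X 0%nat ->
  (forall j, (j < n)%nat -> X (S j) = a * sum_lt (S j) X + c * u j) ->
  forall k, (k <= n)%nat -> (1 + a) ^ k * X 0%nat <= sum_lt (S k) X.
Proof.
  intros Ha Hc Hu HX H. induction k as [|k IH]; intros Hk; [simpl; lra |].
  change (sum_lt (S (S k)) X) with (sum_lt (S k) X + X (S k)).
  rewrite H by lia. specialize (IH ltac:(lia)).
  assert (0 <= c * u k) by (apply Rmult_le_pos; auto with arith).
  simpl pow. nra.
Qed.

Section FirstColumn.
Variables (lam : R) (d I : nat) (x : nat -> nat -> R) (m : nat).
Hypotheses (Hlam : 0 < lam) (Hd : (0 < d)%nat) (HI : (1 < I)%nat)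
  (Hfix : fixed_point lam d I x) (HmI : (m <= I)%nat)
  (Hbefore : forall j i, (j < m)%nat -> (i <= j)%nat -> x i j = 0)
  (Hfirst : 0 < colsum x m).

Local Notation a := (lam * INR d).
Local Notation Sp k := (sum_lt (S k) (fun i => rowsum I x i)).
Local Notation u i := (x i m).
(* In the balance equations of columns [m] and [m + 1], [rho] only enters as
   [rho_{m-1}^{p,m} = c * x_{p,m}]. *)
Local Notation c := (Rj lam d I x (m - 1) / colsum x m).

Lemma balance i j : (i <= j)%nat -> (j <= I)%nat -> drift lam d I x i j = 0.
Proof. apply Hfix. Qed.

Lemma a_pos : 0 < a.
Proof. apply Rmult_lt_0_compat; [exact Hlam | apply lt_0_INR; exact Hd]. Qed.

Lemma colsum_before j : (j < m)%nat -> colsum x j = 0.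
Proof. intros H. apply sum_lt_zero. intros k Hk. apply Hbefore; lia. Qed.

Lemma cumul_colsum_before k : (k < m)%nat -> sumR 0 k (fun i => colsum x i) = 0.
Proof. intros H. apply sum_lt_zero. intros; apply colsum_before; lia. Qed.

Lemma cumul_colsum_from k : (m <= k)%nat -> (k <= I)%nat ->
  sumR 0 k (fun i => colsum x i) <> 0.
Proof.
  intros H1 H2. rewrite sumR_from0.
  assert (colsum x m <= sum_lt (S k) (fun i => colsum x i)).
  { apply (sum_lt_term_le (S k) (fun i => colsum x i) m); [| lia].
    intros. apply (colsum_nonneg lam d I); [exact Hfix | lia]. }
  lra.
Qed.

Lemma Rj_from k : (m <= k)%nat -> (k <= I)%nat -> Rj lam d I x k = 0.
Proof.
  intros H1 H2. unfold Rj.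
  destruct (Req_dec_T _ 0) as [e | e]; [contradiction (cumul_colsum_from k H1 H2) | ring].
Qed.

Lemma Gj_from k : (m <= k)%nat -> (k <= I)%nat -> Gj lam d I x k = 0.
Proof.
  intros H1 H2. unfold Gj.
  destruct (Req_dec_T _ 0) as [e | e]; [contradiction (cumul_colsum_from k H1 H2) | ring].
Qed.

Lemma rho_from k p q : (m <= k)%nat -> (k <= I)%nat -> rho lam d I x k p q = 0.
Proof. intros H1 H2. unfold rho. rewrite Rj_from by auto. destruct (Rlt_dec _ _); ring. Qed.

Lemma rho_before_column k p q : (q < m)%nat -> rho lam d I x k p q = 0.
Proof.
  intros H. unfold rho. rewrite colsum_before by auto. destruct (Rlt_dec _ _); [lra | ring].
Qed.

Lemma rho_first_column k p : rho lam d I x k p m = Rj lam d I x k / colsum x m * u p.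
Proof. unfold rho. destruct (Rlt_dec 0 (colsum x m)); [field | contradiction]; lra. Qed.

Lemma Rj_before k : (k < m)%nat -> Rj lam d I x k = Rmax 0 (lam * (1 - INR d * wsum I x k)).
Proof.
  intros H. unfold Rj. rewrite cumul_colsum_before by auto.
  destruct (Req_dec_T 0 0); [ring | congruence].
Qed.

Lemma Gj_before k : (k < m)%nat -> Gj lam d I x k =
  a * (if Rle_dec (INR d * wsum I x k) 1 then 1 else 0) * sumR 0 k (fun i => rowsum I x i).
Proof.
  intros H. unfold Gj. rewrite cumul_colsum_before by auto.
  destruct (Req_dec_T 0 0); [reflexivity | congruence].
Qed.

(** * Columns before the first nonempty one *)

Lemma rowsum0_le_before : (0 < m)%nat -> INR d * rowsum I x 0 <= 1.
Proof.
  intros Hm. pose proof (balance 0 0 ltac:(lia) ltac:(lia)) as D.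
  rewrite drift_00, Rj_before, (Hbefore 0 0) in D by lia.
  rewrite wsum_0 in D.
  destruct (Rle_dec (INR d * rowsum I x 0) 1) as [h | h]; [exact h |].
  rewrite Rmax_left in D by nra. nra.
Qed.

Lemma wsum_le_of_Gj k : (k < m)%nat -> Gj lam d I x k = a * Sp k -> INR d * wsum I x k <= 1.
Proof.
  intros Hk HG. rewrite Gj_before in HG by exact Hk.
  destruct (Rle_dec (INR d * wsum I x k) 1) as [h | h]; [exact h |].
  pose proof a_pos. rewrite sumR_from0 in HG.
  assert (Hz : Sp k = 0) by (apply (Rmult_eq_reg_l a); lra).
  enough (Hw : wsum I x k = 0) by (rewrite Hw in h; lra).
  unfold wsum. rewrite sumR_from0. apply sum_lt_zero. intros i Hi.
  rewrite (sum_lt_nonneg_eq0 (S k) (fun i => rowsum I x i) i) by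
    (auto; intros; apply (rowsum_nonneg lam d I x Hfix)).
  ring.
Qed.

Lemma Gj_1_before : (1 < m)%nat -> Gj lam d I x 1 = a * Sp 1.
Proof.
  intros Hm. pose proof (balance 1 1 ltac:(lia) ltac:(lia)) as D.
  pose proof (rowsum0_le_before ltac:(lia)).
  rewrite drift_11, Rj_before, rho_before_column, (Hbefore 1 1) in D by lia.
  rewrite wsum_0 in D.
  rewrite Rmax_right in D by nra. simpl. lra.
Qed.

Lemma Gj_succ_before k : (1 <= k)%nat -> (S k < m)%nat ->
  Gj lam d I x k = a * Sp k -> Gj lam d I x (S k) = a * Sp (S k).
Proof.
  intros Hk1 Hk2 HG. pose proof (balance (S k) (S k) ltac:(lia) ltac:(lia)) as D.
  rewrite drift_diag, !rho_before_column, (Hbefore (S k) (S k)) in D by lia.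
  rewrite Nat.sub_succ, Nat.sub_0_r, HG in D.
  change (Sp (S k)) with (Sp k + rowsum I x (S k)). lra.
Qed.

Lemma threshold_before k : (k < m)%nat ->
  INR d * wsum I x k <= 1 /\ ((1 <= k)%nat -> Gj lam d I x k = a * Sp k).
Proof.
  induction k as [|k IH]; intros Hk.
  - split; [| lia].
    rewrite wsum_0.
    apply rowsum0_le_before; lia.
  - assert (HG : Gj lam d I x (S k) = a * Sp (S k)).
    { destruct k as [|k]; [apply Gj_1_before; lia |].
      apply Gj_succ_before; [lia | lia |]. apply IH; lia. }
    split; [apply wsum_le_of_Gj |]; auto.
Qed.

Lemma Rj_last_before : (1 <= m)%nat ->
  Rj lam d I x (m - 1) = lam * (1 - INR d * sum_lt m (fun j => Sp j)).
Proof.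
  intros H. rewrite Rj_before by lia.
  replace m with (S (m - 1)) at 2 by lia. rewrite <- wsum_partial_sums.
  apply Rmax_right. destruct (threshold_before (m - 1) ltac:(lia)). nra.
Qed.

Lemma Gj_last_before : (2 <= m)%nat -> Gj lam d I x (m - 1) = a * Sp (m - 1).
Proof. intros H. apply (threshold_before (m - 1)); lia. Qed.

(** * Columns beyond [m + 1] are empty *)

Lemma diag_vanishes_beyond j : (m + 2 <= j)%nat -> (j <= I)%nat ->
  (forall k i, (j < k)%nat -> (k <= I)%nat -> (i <= k)%nat -> x i k = 0) -> x j j = 0.
Proof.
  intros Hj1 Hj2 Hlater. destruct (Nat.eq_dec j I) as [-> | HjI].
  - pose proof (balance I I ltac:(lia) ltac:(lia)) as D.
    rewrite drift_II, !rho_from, Gj_from in D by lia. lra.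
  - pose proof (balance j j ltac:(lia) ltac:(lia)) as D.
    rewrite drift_diag, !rho_from, !Gj_from in D by lia.
    rewrite (rowsum_single I x j j) in D by (try lia; intros; apply (Hlater k); lia).
    pose proof a_pos. nra.
Qed.

Lemma column_vanishes_of_diag j : (m + 2 <= j)%nat -> (j <= I)%nat -> x j j = 0 ->
  forall i, (i <= j)%nat -> x i j = 0.
Proof.
  intros Hj1 Hj2 Hjj.
  enough (Hdown : forall t, (t <= j)%nat -> x (j - t)%nat j = 0).
  { intros i Hi. replace i with (j - (j - i))%nat by lia. apply Hdown; lia. }
  induction t as [|t IH]; intros Ht; [rewrite Nat.sub_0_r; exact Hjj |].
  pose proof (balance (j - S t) j ltac:(lia) ltac:(lia)) as D.
  rewrite drift_offdiag, !rho_from in D by lia.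
  replace (S (j - S t)) with (j - t)%nat in D by lia.
  rewrite IH in D by lia.
  pose proof (fixed_point_nonneg lam d I x Hfix (j - S t) j ltac:(lia) ltac:(lia)).
  pose proof a_pos. destruct (Nat.ltb 0 (j - S t)), (andb _ _); nra.
Qed.

Lemma column_vanishes_beyond j i : (m + 2 <= j)%nat -> (j <= I)%nat -> (i <= j)%nat ->
  x i j = 0.
Proof.
  remember (I - j)%nat as n eqn:Hn. revert j i Hn.
  induction n as [n IH] using lt_wf_ind. intros j i Hn Hj1 Hj2 Hi.
  apply column_vanishes_of_diag; auto.
  apply diag_vanishes_beyond; auto.
  intros k i' Hk1 Hk2 Hi'. apply (IH (I - k)%nat) with (j := k); lia.
Qed.

(** * Support in columns [m] and [m + 1] *)

Section NotLastColumn.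
Hypothesis HmI' : (m < I)%nat.

Local Notation v i := (x i (S m)).

Lemma rowsum_upto_first i : (i <= m)%nat -> rowsum I x i = u i + v i.
Proof.
  intros Hi. unfold rowsum, sumR.
  rewrite (sum_lt_ext _ _ (fun k => (if Nat.eqb k m then u i else 0)
                                    + (if Nat.eqb k (S m) then v i else 0))).
  { rewrite sum_lt_plus, !sum_lt_delta by lia. reflexivity. }
  intros k Hk.
  destruct (Nat.leb_spec i k), (Nat.eqb_spec k m), (Nat.eqb_spec k (S m));
    try subst k; try lia; try ring.
  destruct (Nat.lt_ge_cases k m).
  - rewrite Hbefore by lia. ring.
  - rewrite column_vanishes_beyond by lia. ring.
Qed.

Lemma rowsum_second : rowsum I x (S m) = v (S m).
Proof.
  apply rowsum_single; try lia.
  intros k h1 h2 h3. apply column_vanishes_beyond; lia.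
Qed.

Lemma rowsum_beyond i : (S m < i)%nat -> rowsum I x i = 0.
Proof.
  intros Hi. apply sum_lt_zero. intros k Hk.
  destruct (Nat.leb_spec i k); [apply column_vanishes_beyond; lia | reflexivity].
Qed.

Lemma Sp_stable k : (S m <= k)%nat -> Sp k = Sp (S m).
Proof.
  intros Hk. replace (S k) with (S (S m) + (k - S m))%nat by lia.
  rewrite sum_lt_add, (sum_lt_zero (k - S m)); [ring |].
  intros; apply rowsum_beyond; lia.
Qed.

Lemma Sp_second : Sp (S m) = 1.
Proof. rewrite <- (Sp_stable I) by lia. apply Hfix. Qed.

Lemma Sp_first_add_corner : Sp m + v (S m) = 1.
Proof. rewrite <- Sp_second, <- rowsum_second. reflexivity. Qed.

Lemma colsum_first_add_second : colsum x m + colsum x (S m) = 1.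
Proof.
  rewrite <- Sp_second. unfold colsum. rewrite !sumR_from0.
  change (Sp (S m)) with (Sp m + rowsum I x (S m)).
  rewrite rowsum_second, (sum_lt_ext (S m) (fun i => rowsum I x i) (fun i => u i + v i))
    by (intros; apply rowsum_upto_first; lia).
  rewrite sum_lt_plus. simpl. ring.
Qed.

Lemma LM_two_columns : LM I x = INR m * colsum x m + INR (S m) * colsum x (S m).
Proof.
  unfold LM.
  rewrite sumR_vanishing_below by (intros k Hk; replace k with 0%nat by lia; simpl; ring).
  rewrite (sum_lt_ext _ _ (fun j =>
              (if Nat.eqb j m then INR m * colsum x m else 0)
              + (if Nat.eqb j (S m) then INR (S m) * colsum x (S m) else 0))).
  { rewrite sum_lt_plus, !sum_lt_delta by lia. reflexivity. }
  intros k Hk.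
  destruct (Nat.eqb_spec k m), (Nat.eqb_spec k (S m)); try subst k; try lia; try ring.
  destruct (Nat.lt_ge_cases k m).
  - rewrite colsum_before by lia. ring.
  - unfold colsum. rewrite sumR_from0, sum_lt_zero; [ring |].
    intros i Hi. apply column_vanishes_beyond; lia.
Qed.

Lemma LS_partial_sums : LS I x = INR m + 1 - sum_lt m (fun j => Sp j) - Sp m.
Proof.
  unfold LS.
  rewrite sumR_vanishing_below by (intros k Hk; replace k with 0%nat by lia; simpl; ring).
  rewrite (sum_lt_ext _ _ (fun i =>
              INR (S I) * rowsum I x i - (INR (S I) - INR i) * rowsum I x i)) by (intros; ring).
  rewrite sum_lt_minus, (sum_lt_scal _ _ (fun i => rowsum I x i)),
    (sum_lt_weighted _ (fun i => rowsum I x i)).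
  assert (Hsplit : sum_lt (S I) (fun j => Sp j) = sum_lt m (fun j => Sp j) + Sp m + INR (I - m)).
  { replace (S I) with (S m + (I - m))%nat by lia.
    rewrite sum_lt_add, (sum_lt_ext (I - m) _ (fun _ => 1)), sum_lt_const; [simpl; ring |].
    intros t Ht. rewrite Sp_stable by lia. apply Sp_second. }
  rewrite Hsplit, (Sp_stable I), Sp_second, minus_INR, S_INR by lia. ring.
Qed.

Lemma first_column_recurrence i : (i < m)%nat ->
  u (S i) = (if Nat.ltb 0 i then u i else 0) + (a + c) * u i.
Proof.
  intros Hi. pose proof (balance i m ltac:(lia) ltac:(lia)) as D.
  rewrite drift_offdiag, rho_first_column, (rho_before_column (m - 2)) in D by lia.
  rewrite (proj2 (Nat.eqb_neq m I)) in D by lia.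
  destruct (Nat.ltb 0 i); simpl in D; lra.
Qed.

Lemma second_column_recurrence i : (i <= m)%nat ->
  v (S i) = (if Nat.ltb 0 i then v i - c * u (i - 1)%nat else 0) + a * v i.
Proof.
  intros Hi. pose proof (balance i (S m) ltac:(lia) ltac:(lia)) as D.
  rewrite drift_offdiag, Nat.sub_succ, Nat.sub_0_r, (rho_from m), (rho_from (I - 1)) in D by lia.
  destruct i as [|i].
  { rewrite Nat.ltb_irrefl, Bool.andb_false_r in D. rewrite Nat.ltb_irrefl. lra. }
  replace (Nat.ltb 0 (S i)) with true in * by reflexivity.
  replace (S m - 2)%nat with (m - 1)%nat in D by lia.
  rewrite Nat.sub_succ, Nat.sub_0_r, rho_first_column in *.
  destruct (andb _ _); lra.
Qed.

Lemma first_column_diag : (1 <= m)%nat -> (1 + c) * u m = a * (Sp (m - 1) + v m).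
Proof.
  intros Hm. pose proof (rowsum_upto_first m (le_n m)) as Hrow.
  destruct (Nat.eq_dec m 1) as [Hm1 | Hm1].
  - pose proof (balance 1 1 ltac:(lia) ltac:(lia)) as D.
    pose proof (Rj_last_before Hm) as HR. pose proof (rho_first_column 0 1) as Hrho.
    rewrite Hm1 in HR, Hrho, Hrow |- *. simpl in HR |- *.
    rewrite drift_11, (Gj_from 1), Hrho, Hrow in D by lia. lra.
  - pose proof (balance m m ltac:(lia) ltac:(lia)) as D.
    rewrite drift_diag, rho_first_column, (rho_before_column (m - 2)), Gj_last_before,
      (Gj_from m), Hrow in D by lia.
    lra.
Qed.

Lemma corner_second_column : (1 <= m)%nat -> v (S m) = c * u m.
Proof.
  intros Hm. destruct (Nat.eq_dec (S m) I) as [HmI1 | HmI1].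
  - pose proof (balance I I ltac:(lia) ltac:(lia)) as D.
    rewrite drift_II in D by lia.
    replace (I - 2)%nat with (m - 1)%nat in D by lia.
    replace (I - 1)%nat with m in D by lia.
    rewrite rho_first_column, (rho_from m), (Gj_from m) in D by lia.
    replace (x I I) with (v (S m)) in D by (rewrite HmI1; reflexivity). lra.
  - pose proof (balance (S m) (S m) ltac:(lia) ltac:(lia)) as D.
    rewrite drift_diag in D by lia.
    rewrite Nat.sub_succ, Nat.sub_0_r in D. replace (S m - 2)%nat with (m - 1)%nat in D by lia.
    rewrite rho_first_column, (rho_from m), (Gj_from m), (Gj_from (S m)), rowsum_second in D
      by lia.
    lra.
Qed.

Section FirstColumnNotZero.
Hypothesis Hm : (1 <= m)%nat.

Lemma rowsum_telescoped j : (j < m)%nat -> rowsum I x (S j) = a * Sp j + c * u j.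
Proof.
  apply (recurrence_telescope m (fun i => rowsum I x i) (fun i => u i)).
  intros i Hi.
  rewrite !rowsum_upto_first, first_column_recurrence, second_column_recurrence by lia.
  destruct (Nat.ltb 0 i); ring.
Qed.

Lemma Sp_sub_diag k : (1 <= k)%nat -> (k <= m)%nat ->
  Sp k - u k = (1 + a) ^ (k - 1) * ((1 + a) * v 0%nat + u 0%nat).
Proof.
  induction k as [|k IH]; intros Hk1 Hk2; [lia |].
  destruct k as [|k].
  - change (Sp 1) with (0 + rowsum I x 0 + rowsum I x 1).
    rewrite !rowsum_upto_first, (second_column_recurrence 0) by lia.
    rewrite Nat.ltb_irrefl. simpl. ring.
  - change (Sp (S (S k))) with (Sp (S k) + rowsum I x (S (S k))).
    rewrite rowsum_telescoped, (first_column_recurrence (S k)) by lia.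
    replace (Nat.ltb 0 (S k)) with true by reflexivity.
    transitivity ((1 + a) * (Sp (S k) - u (S k))); [ring |].
    rewrite IH, !Nat.sub_succ, !Nat.sub_0_r by lia. simpl. ring.
Qed.

Lemma first_column_sum k : (1 <= k)%nat -> (k <= m)%nat ->
  (a + c) * sum_lt (S k) (fun i => u i) = (1 + a + c) * u k.
Proof.
  induction k as [|k IH]; intros Hk1 Hk2; [lia |].
  change (sum_lt (S (S k)) (fun i => u i)) with (sum_lt (S k) (fun i => u i) + u (S k)).
  destruct k as [|k].
  - rewrite (first_column_recurrence 0), Nat.ltb_irrefl by lia. simpl. ring.
  - rewrite (first_column_recurrence (S k)) by lia.
    replace (Nat.ltb 0 (S k)) with true by reflexivity.
    rewrite Rmult_plus_distr_l, IH by lia. ring.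
Qed.

Lemma c_mul_colsum : c * colsum x m = Rj lam d I x (m - 1).
Proof. field. lra. Qed.

Lemma rowsum0_value_m_pos : rowsum I x 0 = 1 - lam.
Proof.
  pose proof (partial_sum_expansion m (fun i => rowsum I x i) (fun i => u i) a c
                rowsum_telescoped m (le_n m)) as Hexp.
  pose proof (Rj_last_before Hm) as HR.
  assert (HcU : c * (sum_lt m (fun i => u i) + u m) = Rj lam d I x (m - 1))
    by exact c_mul_colsum.
  pose proof (corner_second_column Hm). pose proof Sp_first_add_corner.
  cbv beta in Hexp. lra.
Qed.

Lemma Sp_first_split : Sp m = Sp (m - 1) + u m + v m.
Proof.
  rewrite Rplus_assoc, <- (rowsum_upto_first m) by lia.
  replace m with (S (m - 1)) at 1 3 by lia. reflexivity.
Qed.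

Lemma geometric_identity_m_pos : (1 + a) ^ m * ((1 + a) * v 0%nat + u 0%nat) = 1.
Proof.
  pose proof (Sp_sub_diag m Hm (le_n m)) as HZ.
  pose proof (first_column_diag Hm). pose proof (corner_second_column Hm).
  pose proof Sp_first_add_corner. pose proof Sp_first_split.
  replace m with (S (m - 1)) at 1 by lia. simpl pow.
  rewrite Rmult_assoc, <- HZ, H2 in *. lra.
Qed.

Lemma LS_value_m_pos : LS I x = INR m + colsum x (S m) - 1 / INR d.
Proof.
  pose proof (Rj_last_before Hm) as HR.
  pose proof (first_column_diag Hm). pose proof c_mul_colsum.
  pose proof colsum_first_add_second.
  assert (HaSp : a * Sp m = (a + c) * colsum x m).
  { pose proof (first_column_sum m Hm (le_n m)) as HT.
    change (sum_lt (S m) (fun i => u i)) with (colsum x m) in HT.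
    rewrite Sp_first_split, HT. lra. }
  assert (Hsum : a * (sum_lt m (fun j => Sp j) + Sp m) = a * (1 / INR d + colsum x m)).
  { replace (a * (1 / INR d + colsum x m)) with (lam + a * colsum x m)
      by (field; apply not_0_INR; lia).
    lra. }
  apply Rmult_eq_reg_l in Hsum; [| pose proof a_pos; lra].
  rewrite LS_partial_sums. lra.
Qed.

End FirstColumnNotZero.

Lemma second_column_head_m0 : m = 0%nat -> v 0%nat = 1 / INR d /\ v 1%nat = lam.
Proof.
  intros Hm0. pose proof (balance 0 0 ltac:(lia) ltac:(lia)) as D.
  rewrite drift_00, (Rj_from 0), rowsum_upto_first in D by lia.
  assert (Hv0 : a * v 0%nat = lam) by (rewrite Hm0 in D |- *; lra).
  pose proof (second_column_recurrence 0 ltac:(lia)) as H2.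
  rewrite Nat.ltb_irrefl in H2. rewrite Hm0 in Hv0, H2 |- *.
  assert (0 < INR d) by (apply lt_0_INR; exact Hd).
  split; [| lra].
  apply (Rmult_eq_reg_l a); [| pose proof a_pos; lra].
  rewrite Hv0. field. lra.
Qed.

Lemma rowsum0_value : rowsum I x 0 = 1 - lam.
Proof.
  destruct (Nat.eq_dec m 0) as [Hm0 | Hm]; [| apply rowsum0_value_m_pos; lia].
  pose proof (second_column_head_m0 Hm0) as [_ Hv1].
  pose proof Sp_first_add_corner as H. rewrite Hm0 in H, Hv1. simpl in H. lra.
Qed.

Lemma geometric_identity : (1 + a) ^ m * ((1 + a) * v 0%nat + u 0%nat) = 1.
Proof.
  destruct (Nat.eq_dec m 0) as [Hm0 | Hm]; [| apply geometric_identity_m_pos; lia].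
  pose proof (second_column_head_m0 Hm0) as [_ Hv1].
  pose proof (second_column_recurrence 0 ltac:(lia)) as H2.
  pose proof rowsum0_value as H0. rewrite (rowsum_upto_first 0) in H0 by lia.
  rewrite Nat.ltb_irrefl in H2. rewrite Hm0 in *. simpl. lra.
Qed.

Lemma first_column_head_pos : 0 < u 0%nat.
Proof.
  destruct (fixed_point_nonneg lam d I x Hfix 0 m ltac:(lia) HmI) as [| Hu0]; [assumption |].
  assert (Hzero : forall k, (k <= m)%nat -> u k = 0).
  { induction k as [|k IH]; intros Hk; [auto |].
    rewrite first_column_recurrence, IH by lia. destruct (Nat.ltb 0 k); ring. }
  assert (colsum x m = 0) by (apply sum_lt_zero; intros; apply Hzero; lia). lra.
Qed.

Lemma LS_value : LS I x = INR m + colsum x (S m) - 1 / INR d.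
Proof.
  destruct (Nat.eq_dec m 0) as [Hm0 | Hm]; [| apply LS_value_m_pos; lia].
  pose proof (second_column_head_m0 Hm0) as [Hv0 Hv1].
  pose proof rowsum0_value as H0. rewrite LS_partial_sums.
  rewrite Hm0 in *. simpl. unfold colsum, sumR. simpl. lra.
Qed.

Lemma LM_eq_LS_add : LM I x = LS I x + 1 / INR d.
Proof.
  rewrite LM_two_columns, LS_value, S_INR.
  pose proof colsum_first_add_second. nra.
Qed.

Lemma LS_bounds : INR m - 1 / INR d <= LS I x <= INR m - 1 / INR d + 1.
Proof.
  rewrite LS_value. pose proof colsum_first_add_second.
  pose proof (colsum_nonneg lam d I x Hfix (S m) HmI'). lra.
Qed.

Lemma pow_bracket_first_column :
  (1 + a) ^ m * (1 - lam) <= 1 < (1 + a) ^ (S m) * (1 - lam).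
Proof.
  pose proof geometric_identity as HG. pose proof first_column_head_pos.
  pose proof (fixed_point_nonneg lam d I x Hfix 0 (S m) ltac:(lia) ltac:(lia)).
  rewrite <- rowsum0_value, (rowsum_upto_first 0) by lia.
  pose proof a_pos. assert (0 < (1 + a) ^ m) by (apply pow_lt; lra).
  assert (0 <= (1 + a) ^ m * (a * v 0%nat)) by (apply Rmult_le_pos; nra).
  assert (0 < a * ((1 + a) ^ m * u 0%nat)) by (apply Rmult_lt_0_compat; nra).
  simpl pow. split; nra.
Qed.

End NotLastColumn.

Section LastColumn.
Hypothesis HmI' : m = I.

Lemma rowsum_last_column i : (i <= m)%nat -> rowsum I x i = u i.
Proof.
  intros Hi. apply rowsum_single; try lia.
  intros k h1 h2 h3. apply Hbefore; lia.
Qed.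

Lemma last_column_recurrence i : (i < m)%nat ->
  u (S i) = (if Nat.ltb 0 i then u i - c * u (i - 1)%nat else 0) + a * u i + c * u i.
Proof.
  intros Hi. pose proof (balance i m ltac:(lia) ltac:(lia)) as D.
  rewrite drift_offdiag, rho_first_column, (rho_before_column (m - 2)) in D by lia.
  replace (rho lam d I x (I - 1) (i - 1) I) with (rho lam d I x (m - 1) (i - 1) m) in D
    by (rewrite HmI'; reflexivity).
  rewrite (proj2 (Nat.eqb_eq m I) HmI'), rho_first_column in D.
  destruct (Nat.ltb 0 i); simpl in D; lra.
Qed.

Lemma last_column_telescoped j : (j < m)%nat ->
  u (S j) = a * sum_lt (S j) (fun i => u i) + c * u j.
Proof. revert j. exact (recurrence_telescope _ _ _ a c last_column_recurrence). Qed.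

Lemma colsum_last_column : colsum x m = 1.
Proof.
  assert (Hall : Sp m = 1) by (rewrite HmI' at 1; apply Hfix).
  rewrite <- Hall. change (colsum x m) with (sum_lt (S m) (fun i => u i)).
  apply sum_lt_ext. intros i Hi. symmetry. apply rowsum_last_column. lia.
Qed.

Lemma last_column_head_ge : 1 - lam <= u 0%nat.
Proof.
  assert (Hm : (1 <= m)%nat) by lia.
  pose proof (partial_sum_expansion m (fun i => u i) (fun i => u i) a c
                last_column_telescoped m (le_n m)) as Hexp.
  pose proof (Rj_last_before Hm) as HR.
  rewrite (sum_lt_ext m _ (fun j => sum_lt (S j) (fun i => u i))) in HR
    by (intros; apply sum_lt_ext; intros; apply rowsum_last_column; lia).
  assert (Hsum : sum_lt m (fun i => u i) + u m = 1) by exact colsum_last_column.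
  assert (HcR : c = Rj lam d I x (m - 1)) by (rewrite colsum_last_column; field).
  assert (c * u m >= 0)
    by (rewrite HcR; apply Rle_ge, Rmult_le_pos;
        [apply Rj_nonneg | apply (fixed_point_nonneg lam d I x Hfix); lia]).
  cbv beta in Hexp.
  change (sum_lt (S m) (fun i => u i)) with (sum_lt m (fun i => u i) + u m) in Hexp.
  replace (sum_lt m (fun i => u i)) with (1 - u m) in Hexp by lra.
  rewrite HcR in *. lra.
Qed.

Lemma pow_bound_last_column : (1 + a) ^ m * (1 - lam) <= 1.
Proof.
  assert (Hc : 0 <= c).
  { apply Rmult_le_pos; [apply Rj_nonneg | left; apply Rinv_0_lt_compat; exact Hfirst]. }
  assert (Hu : forall k, (k < m)%nat -> 0 <= u k)
    by (intros; apply (fixed_point_nonneg lam d I x Hfix); lia).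
  pose proof (partial_sum_ge_geometric m (fun i => u i) (fun i => u i) a c a_pos Hc Hu
                (Hu 0%nat ltac:(lia)) last_column_telescoped m (le_n m)) as Hgeo.
  pose proof last_column_head_ge.
  assert (0 < (1 + a) ^ m) by (apply pow_lt; pose proof a_pos; lra).
  change (sum_lt (S m) (fun i => u i)) with (colsum x m) in Hgeo.
  rewrite colsum_last_column in Hgeo. nra.
Qed.

End LastColumn.

End FirstColumn.

Lemma pow_mul_le_1_iff q r n : 1 < q -> 0 < r ->
  (q ^ n * r <= 1 <-> INR n <= - ln r / ln q).
Proof.
  intros Hq Hr. assert (Hlnq : 0 < ln q) by (rewrite <- ln_1; apply ln_increasing; lra).
  assert (Hpos : 0 < q ^ n * r) by (apply Rmult_lt_0_compat; [apply pow_lt |]; lra).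
  assert (Hln : ln (q ^ n * r) = INR n * ln q + ln r)
    by (rewrite ln_mult, ln_pow by (try apply pow_lt; lra); reflexivity).
  assert (Hdiv : INR n <= - ln r / ln q <-> ln (q ^ n * r) <= 0).
  { rewrite Hln. split; intros H.
    - apply (Rmult_le_compat_r (ln q)) in H; [| lra].
      replace (- ln r / ln q * ln q) with (- ln r) in H by (field; lra). lra.
    - apply (Rmult_le_reg_r (ln q)); [lra |].
      replace (- ln r / ln q * ln q) with (- ln r) by (field; lra). lra. }
  rewrite Hdiv, <- ln_1. split; intros H.
  - destruct H as [H | ->]; [left; apply ln_increasing |]; lra.
  - destruct (Rle_dec (q ^ n * r) 1) as [| Hgt]; [assumption |].
    pose proof (ln_increasing 1 (q ^ n * r) ltac:(lra) ltac:(lra)). lra.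
Qed.

Lemma jstar_eq_of_pow_bracket lam d m : 0 < lam -> lam < 1 -> 0 < lam * INR d ->
  (1 + lam * INR d) ^ m * (1 - lam) <= 1 -> 1 < (1 + lam * INR d) ^ (S m) * (1 - lam) ->
  jstar lam d = Z.of_nat m.
Proof.
  intros Hlam Hlam1 Ha Hle Hlt. unfold jstar. symmetry. apply Int_part_spec.
  rewrite <- INR_IZR_INZ, Rplus_comm.
  rewrite pow_mul_le_1_iff in Hle by lra.
  assert (~ INR (S m) <= - ln (1 - lam) / ln (1 + lam * INR d))
    by (rewrite <- pow_mul_le_1_iff by lra; lra).
  rewrite S_INR in *. lra.
Qed.

Lemma pow_gt_1_of_gt_jstar lam d n : 0 < lam -> lam < 1 -> 0 < lam * INR d ->
  (Z.of_nat n > jstar lam d)%Z -> 1 < (1 + lam * INR d) ^ n * (1 - lam).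
Proof.
  intros Hlam Hlam1 Ha Hn. unfold jstar in Hn. rewrite Rplus_comm in Hn.
  set (t := - ln (1 - lam) / ln (1 + lam * INR d)) in Hn.
  destruct (Rlt_or_le 1 ((1 + lam * INR d) ^ n * (1 - lam))) as [| Hle]; [assumption |].
  rewrite pow_mul_le_1_iff in Hle by lra. fold t in Hle.
  pose proof (base_Int_part t) as [_ Hfl].
  assert (Hz : (Int_part t + 1 <= Z.of_nat n)%Z) by lia.
  apply IZR_le in Hz. rewrite plus_IZR, <- INR_IZR_INZ in Hz. lra.
Qed.

Lemma exists_least_nat (P : nat -> Prop) n :
  P n -> exists m, P m /\ forall k, (k < m)%nat -> ~ P k.
Proof.
  revert P. induction n as [n IH] using lt_wf_ind. intros P Hn.
  destruct (classic (exists k, (k < n)%nat /\ P k)) as [[k [Hk Pk]] | H].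
  - exact (IH k Hk P Pk).
  - exists n. split; [exact Hn |]. intros k Hk Pk. apply H. eauto.
Qed.

Lemma first_nonempty_column lam d I x : fixed_point lam d I x ->
  exists m, (m <= I)%nat /\ (forall j i, (j < m)%nat -> (i <= j)%nat -> x i j = 0) /\
            0 < colsum x m.
Proof.
  intros Hfix.
  set (P := fun j => (j <= I)%nat /\ exists i, (i <= j)%nat /\ x i j <> 0).
  assert (HP : exists j, P j).
  { apply NNPP. intros Hnone. destruct Hfix as [[_ Htot] _].
    enough (sumR 0 I (fun i => sumR i I (fun j => x i j)) = 0) by lra.
    apply sum_lt_zero. intros i Hi. apply sum_lt_zero. intros k Hk.
    destruct (Nat.leb_spec i k); [| reflexivity].
    apply NNPP. intros Hx. apply Hnone. exists k. split; [lia | eauto]. }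
  destruct HP as [j0 Hj0].
  destruct (exists_least_nat P j0 Hj0) as [m [[HmI [i0 [Hi0 Hx0]]] Hmin]].
  exists m. split; [exact HmI | split].
  - intros j i Hj Hi. apply NNPP. intros Hx. apply (Hmin j Hj). split; [lia | eauto].
  - pose proof (fixed_point_nonneg lam d I x Hfix i0 m Hi0 HmI).
    pose proof (sum_lt_term_le (S m) (fun i => x i m) i0
                  ltac:(intros; apply (fixed_point_nonneg lam d I x Hfix); lia) ltac:(lia)).
    change (colsum x m) with (sum_lt (S m) (fun i => x i m)). lra.
Qed.

Theorem proposition2 (lam : R) (d I : nat) (x : nat -> nat -> R) :
  0 < lam -> lam < 1 -> (2 <= d)%nat -> (1 < I)%nat ->
  (Z.of_nat I > jstar lam d)%Z ->
  fixed_point lam d I x ->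
  LM I x = LS I x + 1 / INR d /\
  IZR (jstar lam d) - 1 / INR d <= LS I x /\
  LS I x <= IZR (jstar lam d) - 1 / INR d + 1.
Proof.
  intros Hlam Hlam1 Hd HI Hjs Hfix.
  assert (Hd0 : (0 < d)%nat) by lia.
  assert (Ha : 0 < lam * INR d) by (apply Rmult_lt_0_compat; [lra | apply lt_0_INR; lia]).
  destruct (first_nonempty_column lam d I x Hfix) as [m [HmI [Hbefore Hfirst]]].
  destruct (Nat.eq_dec m I) as [HmI' | HmI'].
  - pose proof (pow_bound_last_column lam d I x m Hlam Hd0 HI Hfix HmI Hbefore Hfirst HmI').
    pose proof (pow_gt_1_of_gt_jstar lam d I Hlam Hlam1 Ha Hjs).
    rewrite HmI' in *. lra.
  - assert (HmI1 : (m < I)%nat) by lia.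
    destruct (pow_bracket_first_column lam d I x m Hlam Hd0 HI Hfix HmI Hbefore Hfirst HmI1).
    rewrite (jstar_eq_of_pow_bracket lam d m), <- INR_IZR_INZ by assumption.
    split; [exact (LM_eq_LS_add lam d I x m Hlam Hd0 HI Hfix HmI Hbefore Hfirst HmI1) |].
    exact (LS_bounds lam d I x m Hlam Hd0 HI Hfix HmI Hbefore Hfirst HmI1).
Qed.
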